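(* Let $(V,\langle\cdot\,,\cdot\rangle_V)$ be an admissible $\mathrm{Cl}_{r,1}$-module and $J_i=J_{z_i}$, $i=1,\ldots,r+1$, the representations of orthonormal generators $z_1,\ldots,z_{r+1}$ of $\mathrm{Cl}_{r,1}$, so $J_i^2=-\mathrm{Id}_V$ for $i\le r$ and $J_{r+1}^2=\mathrm{Id}_V$. Let $U\subset V$ be a subspace invariant under $J_1,\ldots,J_r$ with a basis $u_1,\ldots,u_l$ such that $\{u_\alpha\}$ is orthonormal, each $J_i$ ($i=1,\ldots,r$) permutes $\{u_\alpha\}$ up to sign, and $\langle J_iu_\alpha,u_\beta\rangle_V\in\{1,-1,0\}$ for all $i\le r$ and all $\alpha,\beta$. Put $\tilde u_\alpha=J_{r+1}u_\alpha$, $\widetilde U=\mathrm{span}\{\tilde u_1,\ldots,\tilde u_l\}$ and $W=\mathrm{span}\{u_1,\ldots,u_l,\tilde u_1,\ldots,\tilde u_l\}$. If the decomposition $W=U\oplus\widetilde U$ is orthogonal with respect to $\langle\cdot\,,\cdot\rangle_V$, then $(W,\langle\cdot\,,\cdot\rangle_W)$, where $\langle\cdot\,,\cdot\rangle_W$ is the restriction of $\langle\cdot\,,\cdot\rangle_V$ to $W$, is an admissible integral $\mathrm{Cl}_{r,1}$-module. If $U$ has minimal dimension, then $W$ is an admissible integral $\mathrm{Cl}_{r,1}$-module of minimal dimension.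
   Context: A scalar product is a real symmetric non-degenerate bilinear form; a set $\{u_\alpha\}$ is orthonormal if $\langle u_\alpha,u_\beta\rangle=0$ for $\alpha\neq\beta$ and $\langle u_\alpha,u_\alpha\rangle=\pm1$. $\mathrm{Cl}_{r,s}$ is the Clifford algebra generated by $\mathbb R^{r,s}$ ($\mathbb R^{r+s}$ with quadratic form $x_1^2+\dots+x_r^2-x_{r+1}^2-\dots-x_{r+s}^2$) with $z^2=-\langle z,z\rangle\cdot1$. A module $V$ with representation $J$ is admissible if it carries a scalar product with $\langle J_zu,v\rangle_V=-\langle u,J_zv\rangle_V$. An admissible integral module is an admissible module having an orthonormal basis $\{v_\alpha\}$ with $\langle J_{z_k}v_\alpha,v_\beta\rangle\in\{1,-1,0\}$ for all orthonormal generators $z_k$ and all $\alpha,\beta$. An operator permutes a basis up to sign if it sends each basis vector to $\pm$ some basis vector. ''Minimal dimension'' for $U$ refers to the minimal dimension of an admissible $\mathrm{Cl}_{r,0}$-module (here $U$ with $J_1,\dots,J_r$), and for $W$ to minimal dimension among admissible $\mathrm{Cl}_{r,1}$-modules. *)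

(* Vectors of V = R^n are row vectors
   'rV[R]_n, a linear map J acts by v |-> v *m J, subspaces are row spaces
   of matrices (mxalgebra, scope %MS). *)
From HB Require Import structures.
From mathcomp Require Import all_boot all_order all_algebra.
From mathcomp Require Import reals.
Set Implicit Arguments. Unset Strict Implicit. Unset Printing Implicit Defensive.
Import Order.TTheory GRing.Theory Num.Theory.
Local Open Scope ring_scope.

Section Defs.
Variable R : realType.

Definition bform (n : nat) (G : 'M[R]_n) (x y : 'rV[R]_n) : R :=
  (x *m G *m y^T) 0 0.

Definition scalar_product (n : nat) (G : 'M[R]_n) : Prop :=
  G^T = G /\ G \in unitmx.

Definition cl_norm (r s : nat) (i : 'I_(r + s)) : R :=
  if (i < r)%N then 1 else -1.

(* J represents the is_orthonormal generators z_1..z_{r+s} of Cl_{r,s}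
   (z^2 = -<z,z>): J_i J_j + J_j J_i = -2 <z_i,z_j> Id. *)
Definition clifford_rep (r s n : nat) (J : 'I_(r + s) -> 'M[R]_n) : Prop :=
  forall i j : 'I_(r + s),
    J i *m J j + J j *m J i = (if i == j then - (2 * cl_norm i) else 0)%:M.

Definition admissible (r s n : nat) (G : 'M[R]_n)
    (J : 'I_(r + s) -> 'M[R]_n) : Prop :=
  [/\ scalar_product G, clifford_rep J &
      forall (i : 'I_(r + s)) (x y : 'rV[R]_n),
        bform G (x *m J i) y = - bform G x (y *m J i)].

Definition has_admissible_module (r s d : nat) : Prop :=
  exists (G : 'M[R]_d) (J : 'I_(r + s) -> 'M[R]_d), admissible G J.

Definition min_admissible_dim (r s d : nat) : Prop :=
  [/\ (0 < d)%N, has_admissible_module r s d &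
      forall d', (0 < d')%N -> has_admissible_module r s d' -> (d <= d')%N].

Definition is_orthonormal (n m : nat) (G : 'M[R]_n) (u : 'I_m -> 'rV[R]_n)
  : Prop :=
  (forall a b : 'I_m, a != b -> bform G (u a) (u b) = 0) /\
  (forall a : 'I_m, bform G (u a) (u a) = 1 \/ bform G (u a) (u a) = -1).

Definition in_pm1_0 (x : R) : Prop := x = 1 \/ x = -1 \/ x = 0.

Definition admissible_integral_submodule (r s n m : nat) (G : 'M[R]_n)
    (J : 'I_(r + s) -> 'M[R]_n) (W : 'M[R]_(m, n)) : Prop :=
  [/\
      forall i, (W *m J i <= W)%MS,
      (* the restriction <.,.>_W is a scalar product (non-degenerate;
         symmetry and bilinearity are inherited) *)
      (forall x : 'rV[R]_n, (x <= W)%MS ->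
         (forall y : 'rV[R]_n, (y <= W)%MS -> bform G x y = 0) -> x = 0),
      (forall i (x y : 'rV[R]_n), (x <= W)%MS -> (y <= W)%MS ->
         bform G (x *m J i) y = - bform G x (y *m J i)) &
      exists w : 'I_(\rank W) -> 'rV[R]_n,
        [/\ forall a, (w a <= W)%MS,
            row_free (\matrix_(a < \rank W) w a),
            is_orthonormal G w &
            forall i a b, in_pm1_0 (bform G (w a *m J i) (w b))]].

End Defs.

Definition gen (r : nat) (i : 'I_r) : 'I_(r + 1) := lshift 1 i.
Definition lastgen (r : nat) : 'I_(r + 1) :=
  Ordinal (eq_leq (esym (addn1 r)) : (r < r + 1)%N).

From HB Require Import structures.
From mathcomp Require Import all_boot all_order all_algebra.
From mathcomp Require Import reals complex zify.
Set Implicit Arguments. Unset Strict Implicit. Unset Printing Implicit Defensive.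
Import Order.TTheory GRing.Theory Num.Theory.
Local Open Scope ring_scope.

(* The doubled family u_1, ..., u_l, u_1 J_{r+1}, ..., u_l J_{r+1} is again
   orthonormal, because J_{r+1} is skew, squares to 1 and anticommutes with
   J_1, ..., J_r; its Gram and Clifford coefficients are, up to sign, those of
   the u_a or 0.  So W is an admissible integral Cl_{r,1}-module of dimension 2l.

   For minimality, let V be any admissible Cl_{r,1}-module.  Averaging the
   standard form over the products of the generators gives a positive definite
   form g for which J_1, ..., J_r are skew and J_{r+1} is symmetric.  The
   operator T with <x, y>_V = g(x T, y) commutes with J_1, ..., J_r and, being
   g-self-adjoint, has a real eigenvalue.  Its eigenspace is proper (T is not
   scalar, since J_{r+1} is skew for <.,.>_V but symmetric for g), so it or its
   g-orthogonal complement is a Cl_{r,0}-submodule of dimension at most dim V / 2,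
   admissible for the restriction of g.  Hence dim V >= 2l. *)

Lemma matrix_eq_by_form (R : comNzRingType) (d : nat) (M N : 'M[R]_d) :
  (forall x y : 'rV[R]_d, (x *m M *m y^T) 0 0 = (x *m N *m y^T) 0 0) -> M = N.
Proof.
have entry (A : 'M[R]_d) i j :
    (delta_mx (0 : 'I_1) i *m A *m (delta_mx (0 : 'I_1) j)^T) 0 0 = A i j.
  by rewrite trmx_delta -rowE -colE !mxE.
by move=> H; apply/matrixP => i j; rewrite -entry H entry.
Qed.

Section Forms.
Variables (R : realType) (d : nat) (G : 'M[R]_d).
Implicit Types (x y : 'rV[R]_d) (K : 'M[R]_d).

Lemma bform_sym x y : G^T = G -> bform G x y = bform G y x.
Proof.
move=> sG; rewrite /bform -[in LHS](trmxK (x *m G *m y^T)) [in LHS]mxE.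
by rewrite !trmx_mul trmxK sG mulmxA.
Qed.

Lemma bformNl x y : bform G (- x) y = - bform G x y.
Proof. by rewrite /bform !mulNmx mxE. Qed.

Lemma bform_gram (k : nat) (M : 'M[R]_(k, d)) a b :
  (M *m G *m M^T) a b = bform G (row a M) (row b M).
Proof.
have -> : (M *m G *m M^T) a b = (col b (row a (M *m G *m M^T))) 0 0 by rewrite !mxE.
by rewrite !row_mul colE -mulmxA -colE -tr_row.
Qed.

Lemma bform_skewP K :
  reflect (forall x y, bform G (x *m K) y = - bform G x (y *m K))
          (K *m G == - (G *m K^T)).
Proof.
apply: (iffP eqP) => [H x y|H].
  by rewrite /bform -(mulmxA x K) H trmx_mul mulmxN mulNmx mxE !mulmxA.
apply: matrix_eq_by_form => x y; have := H x y; rewrite /bform !mulmxA => ->.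
by rewrite trmx_mul !mulmxA mulmxN mulNmx [RHS]mxE !mulmxA.
Qed.

End Forms.

Lemma admissible_skew (R : realType) (r s d : nat) (G : 'M[R]_d)
    (J : 'I_(r + s) -> 'M[R]_d) i :
  admissible G J -> J i *m G = - (G *m (J i)^T).
Proof. by move=> [_ _ H]; apply/eqP/bform_skewP. Qed.

Section Clifford.
Variables (R : realType) (r s d : nat) (J : 'I_(r + s) -> 'M[R]_d).
Hypothesis cl : clifford_rep J.

Lemma clifford_sq i : J i *m J i = (- cl_norm R i)%:M.
Proof.
have := cl i i; rewrite eqxx => E.
have E2 : (2:R) *: (J i *m J i) = (2:R) *: (- cl_norm R i)%:M.
  by rewrite scale_scalar_mx mulrN -E scaler_nat mulr2n.
by move/scalerI: E2; apply; rewrite pnatr_eq0.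
Qed.

Lemma clifford_anticomm i j : i != j -> J i *m J j = - (J j *m J i).
Proof.
move=> ij; have := cl i j; rewrite (negbTE ij) => E.
by apply/eqP; rewrite -addr_eq0 E; apply/eqP/matrixP=> a b; rewrite !mxE mul0rn.
Qed.

End Clifford.

Lemma gen_inj r : injective (@gen r).
Proof. by move=> i j /(congr1 val) /= E; apply: val_inj. Qed.

Lemma gen_neq_lastgen r (i : 'I_r) : gen i != lastgen r.
Proof. by apply/eqP => /(congr1 val) /= E; move: (ltn_ord i); rewrite E ltnn. Qed.

Lemma genP r (i : 'I_(r + 1)) : (exists j, i = gen j) \/ i = lastgen r.
Proof.
case: (ltnP i r) => h; [left; exists (Ordinal h) | right]; apply: val_inj => //=.
by apply/eqP; rewrite eqn_leq h -ltnS -(addn1 r) ltn_ord.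
Qed.

Lemma cl_norm_gen (R : realType) r (i : 'I_r) : cl_norm R (gen i) = 1.
Proof. by rewrite /cl_norm /= ltn_ord. Qed.

Lemma cl_norm_lastgen (R : realType) r : cl_norm R (lastgen r) = -1.
Proof. by rewrite /cl_norm /= ltnn. Qed.

Section PositiveForms.
Variables (R : rcfType) (d : nat).
Implicit Types (K g : 'M[R]_d) (Ks : seq 'M[R]_d).

Definition hform g (v : 'rV[R[i]]_d) : R[i] :=
  (v *m map_mx (real_complex R) g *m (map_mx Num.conj v)^T) 0 0.

Lemma conj_map_real_complex m k (K : 'M[R]_(m, k)) :
  map_mx Num.conj (map_mx (real_complex R) K) = map_mx (real_complex R) K.
Proof. by apply/matrixP=> a b; rewrite !mxE; exact: conjc_real. Qed.

Lemma hform0 g : hform g 0 = 0.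
Proof. by rewrite /hform !mul0mx mxE. Qed.

Lemma hform1_gt0 v : v != 0 -> 0 < hform 1%:M v.
Proof.
move=> vn0; have sq_ge0 j : 0 <= v 0 j * (v 0 j)^* by exact: mul_conjC_ge0.
have -> : hform 1%:M v = \sum_j v 0 j * (v 0 j)^*.
  rewrite /hform map_scalar_mx /= rmorph1 mulmx1 mxE.
  by apply: eq_bigr => j _; rewrite !mxE.
rewrite lt_def sumr_ge0 ?andbT //; apply: contra vn0 => /eqP/psumr_eq0P H.
apply/eqP/rowP => j; rewrite mxE; apply/eqP; rewrite -mul_conjC_eq0.
by rewrite H.
Qed.

Lemma hform_real g (x : 'rV[R]_d) :
  hform g (map_mx (real_complex R) x) = real_complex R ((x *m g *m x^T) 0 0).
Proof. by rewrite /hform conj_map_real_complex map_trmx -!map_mxM mxE. Qed.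

Lemma form_gt0_hform g :
  (forall v, v != 0 -> 0 < hform g v) ->
  forall x : 'rV[R]_d, x != 0 -> 0 < (x *m g *m x^T) 0 0.
Proof.
move=> gpos x xn0; have := gpos (map_mx (real_complex R) x).
by rewrite map_mx_eq0 hform_real -(rmorph0 (real_complex R)) ltcR => ->.
Qed.

(* The sum of [K_S *m K_S^T] over all ordered sub-products [K_S] of [Ks]. *)
Definition avg_form Ks : 'M[R]_d := foldr (fun K g => g + K *m g *m K^T) 1%:M Ks.

Lemma avg_form_sym Ks : (avg_form Ks)^T = avg_form Ks.
Proof.
elim: Ks => [|K Ks IH] /=; first by rewrite tr_scalar_mx.
by rewrite linearD /= !trmx_mul trmxK IH mulmxA.
Qed.

Lemma hform_avg_form_gt0 Ks v : v != 0 -> 0 < hform (avg_form Ks) v.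
Proof.
elim: Ks v => [|K Ks IH] v vn0 /=; first exact: hform1_gt0.
have -> : hform (avg_form Ks + K *m avg_form Ks *m K^T) v =
    hform (avg_form Ks) v + hform (avg_form Ks) (v *m map_mx (real_complex R) K).
  rewrite /hform rmorphD /= mulmxDr mulmxDl mxE; congr (_ + _).
  rewrite !map_mxM /= -(map_trmx (real_complex R)) conj_map_real_complex.
  by rewrite trmx_mul !mulmxA.
apply: ltr_wpDr (IH v vn0); set w := v *m _.
by have [->|wn0] := eqVneq w 0; [rewrite hform0 | exact/ltW/IH].
Qed.

Definition anticommute K K' := K' *m K == - (K *m K').

(* Conjugation by [K] permutes the terms of the sum up to the signs [c], which cancel. *)
Lemma avg_form_invariant Ks :
  pairwise anticommute Ks ->
  (forall K, K \in Ks -> exists c : R, K *m K = c%:M /\ c * c = 1) ->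
  forall K, K \in Ks -> K *m avg_form Ks *m K^T = avg_form Ks.
Proof.
elim: Ks => [|K0 Ks IH] //; rewrite pairwise_cons /= => /andP[/allP AC ACs] Hsq K.
have {}IH := IH ACs (fun K1 HK => Hsq K1 (mem_behead (HK : K1 \in behead (K0 :: Ks)))).
rewrite inE; case: (boolP (K \in Ks)) => [KKs _|KKs]; last first.
  rewrite orbF => /eqP ->; have [c [Hc c2]] := Hsq K0 (mem_head _ _).
  rewrite mulmxDr mulmxDl addrC; congr (_ + _).
  rewrite !mulmxA Hc -mulmxA -trmx_mul Hc tr_scalar_mx mul_mx_scalar.
  by rewrite mul_scalar_mx scalerA c2 scale1r.
rewrite mulmxDr mulmxDl IH //; congr (_ + _).
have /eqP E := AC K KKs.
rewrite !mulmxA E mulNmx -!mulmxA -trmx_mul E.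
rewrite linearN /= mulmxN mulNmx opprK trmx_mul !mulmxA.
by rewrite -(mulmxA K0 K) -(mulmxA K0 (K *m avg_form Ks)) (IH K KKs).
Qed.

End PositiveForms.

(* For a complex eigenpair [v *m T = a *: v], [a] times the positive real
   [hform g v] is the real number [hform G v]. *)
Lemma real_eigenvalue (R : rcfType) (d : nat) (g G T : 'M[R]_d) :
  (0 < d)%N -> (forall v, v != 0 -> 0 < hform g v) -> G^T = G -> T *m g = G ->
  exists lam : R, eigenvalue T lam.
Proof.
move=> d0 gpos sG TG; set f := real_complex R.
have [a ea] := @spectral.eigenvalue_closed R[i] d (map_mx f T) d0.
have [v vT vn0] := eigenvalueP ea.
set x := hform G v; set Gc := map_mx f G.
have xE : x = a * hform g v.
  by rewrite /x /hform -TG map_mxM mulmxA vT -scalemxAl -scalemxAl mxE.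
have x_real : x \is Num.real.
  rewrite CrealE; apply/eqP.
  have -> : x^* = (map_mx Num.conj (v *m Gc *m (map_mx Num.conj v)^T)) 0 0.
    by rewrite mxE.
  rewrite !map_mxM /= /Gc conj_map_real_complex.
  have -> : map_mx Num.conj (map_mx Num.conj v)^T = v^T.
    by apply/matrixP => i j; rewrite !mxE conjCK.
  have GcT : Gc^T = Gc by rewrite /Gc -[in RHS]sG; apply/matrixP=> i j; rewrite !mxE.
  rewrite /x /hform -/Gc -[in RHS](trmxK (v *m _ *m _)) [in RHS]mxE !trmx_mul trmxK.
  by rewrite GcT mulmxA.
have a_real : a \is Num.real.
  have -> : a = x / hform g v by rewrite xE mulfK // gt_eqF // gpos.
  by rewrite rpredM // rpredV gtr0_real // gpos.
have aE : a = f (complex.Re a) by rewrite /f RRe_real.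
exists (complex.Re a).
rewrite eigenvalue_root_char -(fmorph_root f) map_char_poly -eigenvalue_root_char.
by move: ea; rewrite {1}aE.
Qed.

Lemma gram_unit_of_pos (R : realFieldType) (d k : nat) (g : 'M[R]_d)
    (B : 'M[R]_(k, d)) :
  row_free B -> (forall x : 'rV[R]_d, x != 0 -> 0 < (x *m g *m x^T) 0 0) ->
  B *m g *m B^T \in unitmx.
Proof.
move=> fB gpos; rewrite -row_free_unit -kermx_eq0; apply/eqP/row_matrixP => i.
rewrite row0; set y := row i _.
have /sub_kermxP yK : (y <= kermx (B *m g *m B^T))%MS by exact: row_sub.
have [//|yn0] := eqVneq y 0; have := gpos (y *m B); rewrite mulmx_free_eq0 // yn0.
by rewrite trmx_mul !mulmxA; rewrite !mulmxA in yK; rewrite yK mul0mx mxE ltxx => /(_ isT).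
Qed.

Lemma has_admissible_module_of_subspace (R : realType) (r s d k : nat)
    (G : 'M[R]_d) (J : 'I_(r + s) -> 'M[R]_d) (B : 'M[R]_(k, d)) :
  row_free B -> (forall i, (B *m J i <= B)%MS) -> clifford_rep J -> G^T = G ->
  (forall i, J i *m G = - (G *m (J i)^T)) -> B *m G *m B^T \in unitmx ->
  has_admissible_module R r s k.
Proof.
move=> fB BJ cl sG skG unB.
have [J' J'B] : exists J' : 'I_(r + s) -> 'M[R]_k, forall i, J' i *m B = B *m J i.
  by exists (fun i => B *m J i *m pinvmx B) => i; rewrite mulmxKpV.
exists (B *m G *m B^T), J'; split.
- by split => //; rewrite !trmx_mul trmxK sG mulmxA.
- move=> i j; apply: (row_free_inj fB) => /=.
  rewrite mulmxDl -!mulmxA !J'B !mulmxA !J'B -!mulmxA -mulmxDr cl.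
  by rewrite mul_mx_scalar mul_scalar_mx.
- move=> i; apply/bform_skewP/eqP.
  rewrite !mulmxA J'B -(mulmxA B) skG mulmxN mulNmx; congr (- _).
  by rewrite -(mulmxA _ B^T) -trmx_mul J'B trmx_mul !mulmxA.
Qed.

Lemma has_admissible_module_of_pos_form (R : realType) (r d : nat)
    (A : 'I_r -> 'M[R]_d) (g L : 'M[R]_d) :
  (forall i, A i *m A i = (-1)%:M) ->
  (forall i j, i != j -> A i *m A j = - (A j *m A i)) ->
  g^T = g -> (forall x : 'rV[R]_d, x != 0 -> 0 < (x *m g *m x^T) 0 0) ->
  (forall i, A i *m g = - (g *m (A i)^T)) -> (forall i, (L *m A i <= L)%MS) ->
  has_admissible_module R r 0 (\rank L).
Proof.
move=> AA AC sg gpos skA LA.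
pose J (k : 'I_(r + 0)) := A (cast_ord (addn0 r) k).
apply: (@has_admissible_module_of_subspace R r 0 d _ g J (row_base L)).
- exact: row_base_free.
- by move=> k; rewrite (eqmxMr _ (eq_row_base L)) eq_row_base; apply: LA.
- move=> k1 k2; rewrite /J /cl_norm.
  have -> : (k1 < r)%N by have := ltn_ord k1; rewrite [X in (_ < X)%N]addn0.
  have [<-|ne] := eqVneq k1 k2; first by rewrite AA -raddfD /= mulr1 -opprD.
  by rewrite AC ?addNr ?raddf0 //; apply: contra ne => /eqP/(congr1 val)/eqP.
- exact: sg.
- by move=> k; exact: skA.
- by apply: gram_unit_of_pos => //; exact: row_base_free.
Qed.

Lemma skew_form_neq_scale_sym_form (R : numFieldType) (d : nat) (G g P : 'M[R]_d) lam :
  (0 < d)%N -> G \in unitmx -> P *m P = 1%:M ->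
  P *m G = - (G *m P^T) -> P *m g = g *m P^T -> G != lam *: g.
Proof.
move=> d0 Gu PP skP symP; apply/eqP => Gl.
have PG : P *m G = G *m P^T by rewrite Gl -scalemxAr symP scalemxAl.
have GP0 : G *m P^T = 0.
  have : G *m P^T + G *m P^T = 0 by rewrite -{1}PG skP addNr.
  by rewrite -mulr2n -scaler_nat => /eqP; rewrite scaler_eq0 pnatr_eq0 => /eqP.
have P0 : P^T = 0 by rewrite -(mulKmx Gu P^T) GP0 mulmx0.
have := congr1 trmx PP; rewrite trmx_mul P0 mul0mx tr_scalar_mx => /matrixP.
move/(_ (Ordinal d0) (Ordinal d0)); rewrite !mxE eqxx /= => /eqP.
by rewrite eq_sym oner_eq0.
Qed.

Lemma orth_complement_stable (R : fieldType) (d : nat) (g K E : 'M[R]_d) :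
  K *m g = - (g *m K^T) -> (E *m K <= E)%MS ->
  (kermx (g *m E^T) *m K <= kermx (g *m E^T))%MS.
Proof.
move=> skK EK; have [M EKM] := submxP EK.
apply/sub_kermxP; set Ker := kermx _.
rewrite -mulmxA (mulmxA K) skK mulNmx mulmxN -(mulmxA g) -trmx_mul EKM trmx_mul.
by rewrite (mulmxA g) (mulmxA Ker) mulmx_ker mul0mx oppr0.
Qed.

(* [E] itself or its [g]-orthogonal complement [kermx (g *m E^T)] will do. *)
Lemma half_dim_stable_subspace (R : fieldType) (r d : nat) (A : 'I_r -> 'M[R]_d)
    (g E : 'M[R]_d) :
  g \in unitmx -> (forall i, A i *m g = - (g *m (A i)^T)) ->
  (forall i, (E *m A i <= E)%MS) -> (0 < \rank E < d)%N ->
  exists L : 'M[R]_d,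
    [/\ (0 < \rank L)%N, (2 * \rank L <= d)%N & forall i, (L *m A i <= L)%MS].
Proof.
move=> gu skA EA /andP[E0 Ed].
have [small|big] := leqP (2 * \rank E) d; first by exists E.
exists (kermx (g *m E^T)); rewrite mxrank_ker eqmxMfull ?row_full_unit //.
rewrite mxrank_tr; split; [lia | lia | move=> i].
exact: orth_complement_stable.
Qed.

Section ClR1LowerBound.
Variables (R : realType) (r d : nat) (G : 'M[R]_d) (J : 'I_(r + 1) -> 'M[R]_d).
Hypothesis adm : admissible G J.

Let cl : clifford_rep J. Proof. by case: adm. Qed.
Let A i := J (gen i).
Let P := J (lastgen r).

Let A_sq i : A i *m A i = (-1)%:M.
Proof. by rewrite /A clifford_sq // cl_norm_gen. Qed.

Let P_sq : P *m P = 1%:M.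
Proof. by rewrite /P clifford_sq // cl_norm_lastgen opprK. Qed.

Let A_anticomm i j : i != j -> A i *m A j = - (A j *m A i).
Proof. by move=> ij; rewrite /A clifford_anticomm // (inj_eq (@gen_inj r)). Qed.

Let AP_anticomm i : A i *m P = - (P *m A i).
Proof. by rewrite /A /P clifford_anticomm // gen_neq_lastgen. Qed.

Let g := avg_form (P :: map A (enum 'I_r)).

Let g_invariant : forall K, K \in P :: map A (enum 'I_r) -> K *m g *m K^T = g.
Proof.
apply: avg_form_invariant.
  rewrite pairwise_cons; apply/andP; split.
    by apply/allP => K' /mapP[i _ ->]; apply/eqP; exact: AP_anticomm.
  rewrite pairwise_map; have := enum_uniq 'I_r; rewrite uniq_pairwise.
  by apply: sub_pairwise => i j /= ij; rewrite /anticommute A_anticomm // eq_sym.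
move=> K; rewrite inE => /orP[/eqP ->|/mapP[i _ ->]]; first by exists 1; rewrite P_sq mulr1.
by exists (-1); rewrite A_sq mulrNN mulr1.
Qed.

Let g_pos : forall v, v != 0 -> 0 < hform g v.
Proof. by move=> v; exact: hform_avg_form_gt0. Qed.

Let g_unit : g \in unitmx.
Proof.
have := @gram_unit_of_pos R d d g 1%:M; rewrite mul1mx trmx1 mulmx1; apply.
  by rewrite row_free_unit unitmx1.
exact: form_gt0_hform.
Qed.

Let A_skew_g i : A i *m g = - (g *m (A i)^T).
Proof.
have E : A i *m g *m (A i)^T = g by apply: g_invariant; rewrite inE map_f ?mem_enum ?orbT.
rewrite -[in RHS]E -!mulmxA -trmx_mul A_sq tr_scalar_mx mul_mx_scalar.
by rewrite scaleN1r mulmxN opprK.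
Qed.

Let P_sym_g : P *m g = g *m P^T.
Proof.
have E : P *m g *m P^T = g by apply: g_invariant; rewrite mem_head.
by rewrite -[in RHS]E -!mulmxA -trmx_mul P_sq trmx1 mulmx1.
Qed.

(* [<x, y>_G = <x T, y>_g] *)
Let T := G *m invmx g.

Let T_comm_A i : T *m A i = A i *m T.
Proof.
have h : invmx g *m A i = - ((A i)^T *m invmx g).
  rewrite -[LHS]mulmx1 -(mulmxV g_unit) mulmxA -(mulmxA _ (A i)) A_skew_g.
  by rewrite mulmxN mulNmx !mulmxA mulVmx // mul1mx.
by rewrite /T mulmxA (admissible_skew _ adm) -mulmxA h mulmxN mulNmx mulmxA.
Qed.

Lemma admissible_r1_half_dim :
  (0 < d)%N -> exists k, [/\ (0 < k)%N, (2 * k <= d)%N & has_admissible_module R r 0 k].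
Proof.
move=> d0; have [[sG uG] _ _] := adm.
have [lam Tlam] := real_eigenvalue d0 g_pos sG (mulmxKV g_unit G).
set E := eigenspace T lam.
have EA i : (E *m A i <= E)%MS by apply: comm_mx_stable_eigenspace; exact: T_comm_A.
have E_proper : (0 < \rank E < d)%N.
  rewrite lt0n mxrank_eq0 [E != 0]Tlam ltn_neqAle rank_leq_col andbT /=.
  apply: contraNneq (skew_form_neq_scale_sym_form
    lam d0 uG P_sq (admissible_skew _ adm) P_sym_g) => Efull.
  have /eigenspaceP : (1%:M <= E)%MS by apply: submx_full; rewrite /row_full Efull.
  by rewrite mul1mx => Tl; rewrite -(mulmxKV g_unit G) -/T Tl -scalemxAl mul1mx.
have [L [L0 L2 LA]] := half_dim_stable_subspace g_unit A_skew_g EA E_proper.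
exists (\rank L); split => //.
exact: has_admissible_module_of_pos_form
  A_sq A_anticomm (avg_form_sym _) (form_gt0_hform g_pos) A_skew_g LA.
Qed.

End ClR1LowerBound.

Section OrthonormalFamily.
Variables (R : realType) (n k : nat) (G : 'M[R]_n) (w : 'I_k -> 'rV[R]_n).
Hypothesis orth : is_orthonormal G w.
Let M := \matrix_(a < k) w a.

Lemma orthonormal_gram_sq : M *m G *m M^T *m (M *m G *m M^T) = 1%:M.
Proof.
have [orth0 orth1] := orth; have De a b : (M *m G *m M^T) a b = bform G (w a) (w b).
  by rewrite bform_gram !rowK.
apply/matrixP => a c; rewrite !mxE (bigD1 a) //= big1 => [|b ba]; last first.
  by rewrite De orth0 ?mul0r // eq_sym.
rewrite addr0; have [<-|ac] := eqVneq a c; last by rewrite (De a c) orth0 ?mulr0.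
by rewrite De; case: (orth1 a) => ->; rewrite ?mulrNN mulr1.
Qed.

Lemma orthonormal_gram_unit : M *m G *m M^T \in unitmx.
Proof. by case: (mulmx1_unit orthonormal_gram_sq). Qed.

Lemma orthonormal_row_free : row_free M.
Proof.
apply/eqP/anti_leq; rewrite rank_leq_row /=.
rewrite -{1}(mxrank_unit orthonormal_gram_unit).
by apply: leq_trans (mxrankM_maxl _ _) _; exact: mxrankM_maxl.
Qed.

Lemma orthonormal_nondegenerate x :
  (x <= M)%MS -> (forall a, bform G x (w a) = 0) -> x = 0.
Proof.
move=> /submxP[c ->] x0.
have cD : c *m (M *m G *m M^T) = 0.
  apply/rowP => b; rewrite [RHS]mxE -(x0 b).
  have -> : (c *m (M *m G *m M^T)) 0 b = (col b (c *m (M *m G *m M^T))) 0 0.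
    by rewrite !mxE.
  by rewrite colE -!mulmxA -colE -tr_row rowK /bform !mulmxA.
by rewrite -[c]mulmx1 -(mulmxV orthonormal_gram_unit) mulmxA cD !mul0mx.
Qed.

End OrthonormalFamily.

Lemma in_pm1_0N (R : realType) (x : R) : in_pm1_0 x -> in_pm1_0 (- x).
Proof. by case=> [->|[->|->]]; rewrite /in_pm1_0 ?opprK ?oppr0; tauto. Qed.

Lemma orthonormal_in_pm1_0 (R : realType) (n k : nat) (G : 'M[R]_n)
    (w : 'I_k -> 'rV[R]_n) a b :
  is_orthonormal G w -> in_pm1_0 (bform G (w a) (w b)).
Proof.
case=> orth0 orth1; have [<-|ab] := eqVneq a b; last by rewrite orth0 //; right; right.
by case: (orth1 a) => ->; [left | right; left].
Qed.

Section Doubling.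
Variables (R : realType) (r n l : nat) (G : 'M[R]_n) (J : 'I_(r + 1) -> 'M[R]_n).
Variable u : 'I_l -> 'rV[R]_n.
Hypothesis adm : admissible G J.
Let Umx := \matrix_(a < l) u a.
Let P := J (lastgen r).
Let Utmx := \matrix_(a < l) (u a *m P).
Let W := (Umx + Utmx)%MS.
Hypotheses (U_free : row_free Umx) (U_stable : forall i, (Umx *m J (gen i) <= Umx)%MS).
Hypotheses (u_orth : is_orthonormal G u) (U_Ut_direct : mxdirect (Umx + Utmx)).
Hypothesis U_Ut_orth :
  forall x y : 'rV[R]_n, (x <= Umx)%MS -> (y <= Utmx)%MS -> bform G x y = 0.

Let G_sym : G^T = G. Proof. by case: adm => -[]. Qed.
Let cl : clifford_rep J. Proof. by case: adm. Qed.

Let P_sq : P *m P = 1%:M.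
Proof. by rewrite /P clifford_sq // cl_norm_lastgen opprK. Qed.

Let PA_anticomm i : P *m J (gen i) = - (J (gen i) *m P).
Proof. by rewrite /P clifford_anticomm // eq_sym gen_neq_lastgen. Qed.

Let bform_P x y : bform G (x *m P) (y *m P) = - bform G x y.
Proof. by have [_ _ ->] := adm; rewrite -mulmxA P_sq mulmx1. Qed.

Let Ut_U_orth x y : (x <= Utmx)%MS -> (y <= Umx)%MS -> bform G x y = 0.
Proof. by move=> hx hy; rewrite bform_sym // U_Ut_orth. Qed.

Let u_sub b : (u b <= Umx)%MS. Proof. by rewrite -(rowK u b) row_sub. Qed.

Let Ut_eq : Utmx = Umx *m P.
Proof. by apply/row_matrixP => a; rewrite row_mul !rowK. Qed.

Let uP_sub b : (u b *m P <= Utmx)%MS. Proof. by rewrite Ut_eq submxMr. Qed.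

Let uJ_sub i b : (u b *m J (gen i) <= Umx)%MS.
Proof. exact: submx_trans (submxMr _ (u_sub b)) (U_stable i). Qed.

Let uPJ_sub i b : (u b *m P *m J (gen i) <= Utmx)%MS.
Proof.
rewrite -mulmxA PA_anticomm mulmxN mulmxA eqmx_opp Ut_eq.
exact/submxMr/uJ_sub.
Qed.

Lemma rank_doubled : \rank W = (l + l)%N.
Proof.
have rU : \rank Umx = l by apply/eqP.
rewrite /W mxrank_disjoint_sum; last exact/mxdirect_addsP.
by rewrite Ut_eq mxrankMfree ?rU // row_free_unit; case: (mulmx1_unit P_sq).
Qed.

Hypothesis u_integral :
  forall i a b, in_pm1_0 (bform G (u a *m J (gen i)) (u b)).

Let w (a : 'I_(\rank W)) : 'rV[R]_n :=
  match split (cast_ord rank_doubled a) with inl b => u b | inr b => u b *m P end.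

Let w_sub a : (w a <= W)%MS.
Proof.
rewrite /w; case: split => b.
  exact: submx_trans (u_sub b) (addsmxSl _ _).
exact: submx_trans (uP_sub b) (addsmxSr _ _).
Qed.

Let wJ_sub a i : (w a *m J i <= W)%MS.
Proof.
have UW : (Umx <= W)%MS by exact: addsmxSl.
have UtW : (Utmx <= W)%MS by exact: addsmxSr.
case: (genP i) => [[j ->]|->]; rewrite /w; case: split => b.
- exact: submx_trans (uJ_sub j b) UW.
- exact: submx_trans (uPJ_sub j b) UtW.
- exact: submx_trans (uP_sub b) UtW.
- by rewrite -/P -mulmxA P_sq mulmx1; exact: submx_trans (u_sub b) UW.
Qed.

Let w_orth : is_orthonormal G w.
Proof.
have [u_orth0 u_orth1] := u_orth; split.
  move=> a b ab; rewrite /w.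
  case: (splitP (cast_ord rank_doubled a)) => [j ej|j ej];
    case: (splitP (cast_ord rank_doubled b)) => [k ek|k ek].
  - rewrite u_orth0 //; apply: contraNneq ab => jk; apply/eqP/val_inj.
    by move: ej ek; rewrite /= jk => -> ->.
  - exact: U_Ut_orth (u_sub j) (uP_sub k).
  - exact: Ut_U_orth (uP_sub j) (u_sub k).
  - rewrite bform_P u_orth0 ?oppr0 //; apply: contraNneq ab => jk; apply/eqP/val_inj.
    by move: ej ek; rewrite /= jk => -> ->.
move=> a; rewrite /w; case: split => j; first exact: u_orth1.
by rewrite bform_P; case: (u_orth1 j) => ->; rewrite ?opprK; [right | left].
Qed.

Let w_integral i a b : in_pm1_0 (bform G (w a *m J i) (w b)).
Proof.
have z0 : in_pm1_0 (0 : R) by right; right.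
have [_ _ skG] := adm.
case: (genP i) => [[j ->]|->]; rewrite /w; case: split => a'; case: split => b'.
- exact: u_integral.
- by rewrite (U_Ut_orth (uJ_sub j a') (uP_sub b')).
- by rewrite (Ut_U_orth (uPJ_sub j a') (u_sub b')).
- by rewrite -mulmxA PA_anticomm mulmxN mulmxA bformNl skG -mulmxA P_sq mulmx1 opprK.
- by rewrite -/P (Ut_U_orth (uP_sub a') (u_sub b')).
- by rewrite -/P bform_P; apply/in_pm1_0N/orthonormal_in_pm1_0.
- by rewrite -/P -mulmxA P_sq mulmx1; apply: orthonormal_in_pm1_0.
- by rewrite -/P -mulmxA P_sq mulmx1 (U_Ut_orth (u_sub a') (uP_sub b')).
Qed.

Let M := \matrix_(a < \rank W) w a.

Let M_eq_W : (M :=: W)%MS.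
Proof.
have MW : (M <= W)%MS by apply/row_subP => a; rewrite rowK.
apply/eqmxP; rewrite MW /=.
by have [_] := mxrank_leqif_sup MW; rewrite (eqP (orthonormal_row_free w_orth)) eqxx => <-.
Qed.

Let M_stable i : (M *m J i <= M)%MS.
Proof. by apply/row_subP => a; rewrite row_mul rowK M_eq_W. Qed.

Lemma doubled_admissible_integral : admissible_integral_submodule G J W.
Proof.
have [_ _ skG] := adm; split.
- by move=> i; rewrite -(eqmxMr _ M_eq_W) -M_eq_W; exact: M_stable.
- move=> x; rewrite -M_eq_W => xM x0.
  by apply: orthonormal_nondegenerate w_orth _ xM _ => a; apply/x0/w_sub.
- by move=> i x y _ _; exact: skG.
- exists w; split; [exact: w_sub | exact: orthonormal_row_free w_orth |
    exact: w_orth | exact: w_integral].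
Qed.

Lemma doubled_has_admissible_module : has_admissible_module R r 1 (\rank W).
Proof.
apply: (has_admissible_module_of_subspace (orthonormal_row_free w_orth) M_stable
  cl G_sym _ (orthonormal_gram_unit w_orth)).
by move=> i; exact: admissible_skew adm.
Qed.

End Doubling.

Theorem theorem5p1 (R : realType) (r n l : nat)
    (G : 'M[R]_n) (J : 'I_(r + 1) -> 'M[R]_n)
    (u : 'I_l -> 'rV[R]_n) :
  admissible G J ->
  let Umx := \matrix_(a < l) u a in
  row_free Umx ->
  (forall i : 'I_r, (Umx *m J (gen i) <= Umx)%MS) ->
  is_orthonormal G u ->
  (forall (i : 'I_r) (a : 'I_l), exists b : 'I_l,
      u a *m J (gen i) = u b \/ u a *m J (gen i) = - u b) ->
  (forall (i : 'I_r) (a b : 'I_l), in_pm1_0 (bform G (u a *m J (gen i)) (u b))) ->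
  let Utmx := \matrix_(a < l) (u a *m J (lastgen r)) in
  let W := (Umx + Utmx)%MS in
  mxdirect (Umx + Utmx) ->
  (forall x y : 'rV[R]_n, (x <= Umx)%MS -> (y <= Utmx)%MS -> bform G x y = 0) ->
  admissible_integral_submodule G J W /\
  (min_admissible_dim R r 0 l ->
     admissible_integral_submodule G J W /\
     min_admissible_dim R r 1 (\rank W)).
Proof.
move=> adm Umx U_free U_stable u_orth _ u_integral Utmx W U_Ut_direct U_Ut_orth.
have W_int := doubled_admissible_integral adm U_free U_stable u_orth U_Ut_direct
  U_Ut_orth u_integral.
have rW := rank_doubled adm U_free U_Ut_direct.
split=> // -[l0 _ l_min]; split=> //; split.
- by rewrite rW addn_gt0 l0.
- exact: doubled_has_admissible_module adm U_free U_stable u_orth U_Ut_direct U_Ut_orth.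
- move=> d d0 [G' [J' adm']].
  have [k [k0 k_half k_adm]] := admissible_r1_half_dim adm' d0.
  by have := l_min k k0 k_adm; rewrite rW; lia.
Qed.
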